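(* Let $G$ be an acyclic mixed graph with mixed components $G_1,\dots,G_k$. If $G$ is HTC-identifiable, then every $G_j$ is HTC-identifiable. Moreover, $G$ is HTC-infinite-to-one if and only if some $G_j$ is HTC-infinite-to-one.
   Context: A mixed graph is $G=(V,D,B)$ with $V$ a finite node set, $D$ directed edges $v\to w$, $B$ symmetric bidirected edges $v\leftrightarrow w$, no self-loops; acyclic if $(V,D)$ has no directed cycle. $\mathrm{pa}(v)=\{w:w\to v\in D\}$, $\mathrm{sib}(v)=\{w:w\leftrightarrow v\in B\}$. A half-trek from $y$ to $w$ is a path $y\leftrightarrow w_0\to w_1\to\cdots\to w_r=w$ (left side $\{y\}$, right side $\{w_0,\dots,w_r\}$) or $y\to w_1\to\cdots\to w_r=w$, $r\ge0$ (left side $\{y\}$, right side $\{y,w_1,\dots,w_r\}$). $\mathrm{htr}(v)$ is the set of $w\in V\setminus(\{v\}\cup\mathrm{sib}(v))$ reachable from $v$ by a half-trek. A system of half-treks from $X$ to $Y$: half-treks with distinct sources forming $X$ and distinct targets forming $Y$; no sided intersection: pairwise disjoint left sides and pairwise disjoint right sides. $Y$ satisfies the half-trek criterion w.r.t. $v$ if $|Y|=|\mathrm{pa}(v)|$, $Y\cap(\{v\}\cup\mathrm{sib}(v))=\emptyset$, and there is a system of half-treks with no sided intersection from $Y$ to $\mathrm{pa}(v)$. $G$ is HTC-identifiable if there exist $(Y_v:v\in V)$, each satisfying the half-trek criterion w.r.t. $v$, and a total order $\prec$ on $V$ with $w\prec v$ whenever $w\in Y_v\cap\mathrm{htr}(v)$.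 $G$ is HTC-infinite-to-one if every family $(Y_v:v\in V)$ of subsets of $V$ either contains some $Y_v$ failing the half-trek criterion w.r.t. $v$ or contains a pair with $v\in Y_w$ and $w\in Y_v$. Mixed components: let $C_1,\dots,C_k$ be the node sets of the connected components of $(V,B)$. For $j\in[k]$ let $V_j=C_j\cup\bigcup_{v\in C_j}\mathrm{pa}(v)$, $D_j=\{v\to w\in D: v\in V_j, w\in C_j\}$, $B_j=B\cap(C_j\times C_j)$, and $G_j=(V_j,D_j,B_j)$ (all notions above are applied to $G_j$ with node set $V_j$). *)

From mathcomp Require Import all_boot.
Set Implicit Arguments. Unset Strict Implicit. Unset Printing Implicit Defensive.

Record mgraph (T : finType) := MGraph {
  nodes : {set T};
  dir : rel T;   (* dir v w  <->  v -> w in D *)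
  bid : rel T
}.

Section MixedGraphs.
Variable T : finType.
Implicit Types (G : mgraph T) (v w y : T) (X Y C : {set T}).

Definition wf_mgraph G : Prop :=
  (forall v w, dir G v w -> v \in nodes G /\ w \in nodes G) /\
  (forall v w, bid G v w -> v \in nodes G /\ w \in nodes G) /\
  (forall v w, bid G v w = bid G w v) /\
  (forall v, ~~ dir G v v) /\ (forall v, ~~ bid G v v).

Definition acyclic G : Prop :=
  ~ (exists v (p : seq T), p != [::] /\ path (dir G) v p /\ last v p = v).

Definition pa G v : {set T} := [set w in nodes G | dir G w v].
Definition sib G v : {set T} := [set w in nodes G | bid G w v].

(* A half-trek from y to w, described by a flag b and a node list p:
   - b = true : y <-> w_0 -> w_1 -> ... -> w_r = w, with p = [:: w_0; ...; w_r];
   - b = false: y -> w_1 -> ... -> w_r = w (r >= 0),    with p = [:: w_1; ...; w_r]. *)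
Definition is_htrek G y w (b : bool) (p : seq T) : bool :=
  (y \in nodes G) && uniq (y :: p) &&
  (if b then
     (if p is w0 :: q then [&& bid G y w0, path (dir G) w0 q & last w0 q == w]
      else false)
   else path (dir G) y p && (last y p == w)).

Definition hleft (y : T) : {set T} := [set y].
Definition hright (y : T) (b : bool) (p : seq T) : {set T} :=
  if b then [set x in p] else [set x in y :: p].

(* A system of half-treks with no sided intersection from X to Y: the half-trek
   with source x in X ends at f x, f is a bijection X -> Y, and left sides resp.
   right sides are pairwise disjoint. *)
Definition htsystem G X Y : Prop :=
  exists (f : T -> T) (hb : T -> bool) (hp : T -> seq T),
    {in X &, injective f} /\ f @: X = Y /\
    (forall x, x \in X -> is_htrek G x (f x) (hb x) (hp x)) /\
    (forall x x', x \in X -> x' \in X -> x != x' ->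
       [disjoint hleft x & hleft x'] /\
       [disjoint hright x (hb x) (hp x) & hright x' (hb x') (hp x')]).

Definition in_htr G v w : Prop :=
  [/\ w \in nodes G, w != v, w \notin sib G v & exists b p, is_htrek G v w b p].

Definition HTC G Y v : Prop :=
  [/\ Y \subset nodes G, #|Y| = #|pa G v|, [disjoint Y & v |: sib G v]
    & htsystem G Y (pa G v)].

Definition strict_total_order G (ord : rel T) : Prop :=
  (forall v, v \in nodes G -> ~~ ord v v) /\
  (forall u v w, u \in nodes G -> v \in nodes G -> w \in nodes G ->
      ord u v -> ord v w -> ord u w) /\
  (forall v w, v \in nodes G -> w \in nodes G -> v != w -> ord v w || ord w v).

Definition HTC_identifiable G : Prop :=
  exists (Y : T -> {set T}) (ord : rel T),
    (forall v, v \in nodes G -> HTC G (Y v) v) /\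
    strict_total_order G ord /\
    (forall v w, v \in nodes G -> w \in Y v -> in_htr G v w -> ord w v).

Definition HTC_infinite_to_one G : Prop :=
  forall Y : T -> {set T}, (forall v, v \in nodes G -> Y v \subset nodes G) ->
    (exists2 v, v \in nodes G & ~ HTC G (Y v) v) \/
    (exists v w, [/\ v \in nodes G, w \in nodes G, v \in Y w & w \in Y v]).

Definition is_bcomponent G C : Prop :=
  exists2 v, v \in nodes G & C = [set w in nodes G | connect (bid G) v w].

Definition mixed_comp G C : mgraph T :=
  let VC := C :|: \bigcup_(v in C) pa G v in
  MGraph VC (fun v w => [&& dir G v w, v \in VC & w \in C])
            (fun v w => [&& bid G v w, v \in C & w \in C]).

End MixedGraphs.

From mathcomp Require Import all_boot.
From Stdlib Require Import ClassicalEpsilon Classical.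
Set Implicit Arguments. Unset Strict Implicit. Unset Printing Implicit Defensive.

(* Fix a bidirected component C of G and write G_C for its mixed component,
   with node set V_C = C ∪ pa(C).  For v in C the parents and siblings of v
   are the same in G and G_C, and every half-trek of G_C is one of G.
   Conversely a half-trek of G ending in V_C can be cut down to a half-trek of
   G_C: keep its last maximal stretch inside C together with the node just
   before it.  Truncating every trek of a half-trek system this way turns an
   HTC set Y_v of v in G into an HTC set of v in G_C that agrees with Y_v on C
   (HTC_restrict), while HTC sets in G_C are HTC sets in G (HTC_lift).  Nodes
   of V_C outside C have no parents in G_C, so the empty set serves them.
   The theorem then follows: identifiability restricts to each G_C; an
   infinite-to-one component makes G infinite-to-one; and if no component is
   infinite-to-one, gluing the witnessing families of all components gives a
   witness for G, because a two-cycle Y_v ∋ w, Y_w ∋ v across two different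
   components would yield a directed cycle w -> ... -> v -> ... -> w. *)

Section MixedComponent.
Variable T : finType.
Variable G : mgraph T.
Hypothesis wfG : wf_mgraph G.
Variable C : {set T}.
Hypothesis compC : is_bcomponent G C.

Let VC := C :|: \bigcup_(v in C) pa G v.
Let GC := mixed_comp G C.

Lemma comp_nodes u : u \in C -> u \in nodes G.
Proof. by case: compC => v0 _ ->; rewrite inE => /andP[]. Qed.

Lemma comp_VC u : u \in C -> u \in VC.
Proof. by move=> uC; rewrite /VC inE uC. Qed.

Lemma VC_nodes u : u \in VC -> u \in nodes G.
Proof.
rewrite /VC inE => /orP[/comp_nodes //|/bigcupP[w _]].
by rewrite inE => /andP[].
Qed.

Lemma parent_VC u w : u \in C -> dir G w u -> w \in VC.
Proof.
move=> uC d; rewrite /VC inE; apply/orP; right; apply/bigcupP; exists u => //.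
by rewrite inE d andbT; case: wfG => h _; case: (h _ _ d).
Qed.

Lemma sib_comp u w : u \in C -> bid G w u -> w \in C.
Proof.
have [_ [hB [bsym _]]] := wfG.
case: compC => v0 _ eC; rewrite eC !inE => /andP[_ c] b.
rewrite bsym in b; case: (hB _ _ b) => _ -> /=.
exact: connect_trans c (connect1 b).
Qed.

Lemma pa_mixed_comp v : v \in C -> pa GC v = pa G v.
Proof.
move=> vC; apply/setP => w; rewrite !inE /= vC !andbT.
case d: (dir G w v); rewrite ?andbF //= andbT.
have wV := parent_VC vC d; rewrite /VC inE in wV.
by rewrite inE wV (VC_nodes (parent_VC vC d)).
Qed.

Lemma sib_mixed_comp v : v \in C -> sib GC v = sib G v.
Proof.
move=> vC; apply/setP => w; rewrite !inE /= vC andbT.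
case b: (bid G w v); rewrite ?andbF //= andbT.
have wC := sib_comp vC b.
by rewrite wC (comp_nodes wC).
Qed.

Lemma pa_mixed_comp_outer v : v \notin C -> pa GC v = set0.
Proof. by move=> vnC; apply/setP => w; rewrite !inE /= (negbTE vnC) !andbF. Qed.

Lemma path_mixed_comp x q : path (dir GC) x q -> path (dir G) x q.
Proof. by apply: sub_path => a b /= /andP[]. Qed.

Lemma htrek_lift y t b p : is_htrek GC y t b p -> is_htrek G y t b p.
Proof.
rewrite /is_htrek => /andP[/andP[yV u] r].
rewrite (VC_nodes yV) u /=.
case: b r => [|]; last by case/andP=> /path_mixed_comp -> ->.
case: p {u} => // w0 q /and3P[/= /andP[bb _] /path_mixed_comp -> ->].
by rewrite bb.
Qed.

Lemma last_dirpath_comp x q : path (dir GC) x q -> x \in C -> last x q \in C.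
Proof. by elim: q x => //= x' q IH x /andP[/and3P[_ _ xC] pq] _; apply: IH. Qed.

Lemma htrek_target_comp y t b p : is_htrek GC y t b p -> y \in C -> t \in C.
Proof.
rewrite /is_htrek => /andP[_ r] yC; case: b r.
  case: p => // w0 q /and3P[/= /and3P[_ _ w0C] pq /eqP <-].
  exact: last_dirpath_comp.
by case/andP=> pq /eqP <-; apply: last_dirpath_comp.
Qed.

Lemma htrek_from_outside y t b p : is_htrek GC y t b p -> y \notin C ->
  b = false /\ path (dir G) y p /\ last y p = t.
Proof.
rewrite /is_htrek => /andP[_ r] ynC; case: b r.
  by case: p => // w0 q /and3P[/= /and3P[_ yC _]]; rewrite yC in ynC.
by case/andP=> /path_mixed_comp pq /eqP.
Qed.

Lemma dirpath_mixed_comp z s : path (dir G) z s -> all (mem C) s -> z \in VC ->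
  path (dir GC) z s.
Proof.
elim: s z => //= x s IH z /andP[d ps] /andP[xC al] zV.
by rewrite d zV xC /=; apply: IH => //; apply: comp_VC.
Qed.

(* comp_tail h r = (z, s) splits h :: r as s1 ++ z :: s, where s is the
   longest suffix of r contained in C. *)
Fixpoint comp_tail (h : T) (r : seq T) : T * seq T :=
  match r with
  | [::] => (h, [::])
  | x :: r' => if all (mem C) r then (h, r) else comp_tail x r'
  end.

Lemma comp_tailP h r (e : rel T) :
  [/\ exists s1, h :: r = s1 ++ (comp_tail h r).1 :: (comp_tail h r).2,
      all (mem C) (comp_tail h r).2,
      (comp_tail h r).1 \in C -> (comp_tail h r).1 = h /\ (comp_tail h r).2 = r,
      path e h r -> path e (comp_tail h r).1 (comp_tail h r).2
    & last (comp_tail h r).1 (comp_tail h r).2 = last h r].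
Proof.
elim: r h => [|x r IH] h /=; first by split=> //; exists [::].
case: ifP => hs; first by split=> //; exists [::].
have [[s1 E] al hC pth lst] := IH x.
split=> //.
- by exists (h :: s1); rewrite /= -E.
- move=> zC; have [ex er] := hC zC.
  by move: hs; rewrite /= -{1}ex zC -er al.
- by case/andP=> _ /pth.
Qed.

Lemma comp_tail_htrek h r t : path (dir G) h r -> uniq (h :: r) ->
  last h r = t -> t \in VC ->
  is_htrek GC (comp_tail h r).1 t false (comp_tail h r).2 /\
  {subset (comp_tail h r).1 :: (comp_tail h r).2 <= h :: r}.
Proof.
move=> ph uh lh tV.
case: (comp_tail h r) (comp_tailP h r (dir G)) => z s /= [[s1 E] al _ pth lst].
have ps := pth ph.
have zV : z \in VC.
  case: s ps al lst {E pth} => [_ _ /= ->|x s /= /andP[d _] /andP[xC _] _].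
    by rewrite lh.
  exact: parent_VC xC d.
split; last by move=> u; rewrite E mem_cat orbC => ->.
have : uniq (s1 ++ z :: s) by rewrite -E.
rewrite cat_uniq => /and3P[_ _ uz].
by rewrite /is_htrek zV uz /= dirpath_mixed_comp //= lst lh eqxx.
Qed.

Definition trunc_htrek (y : T) (b : bool) (p : seq T) : T * bool * seq T :=
  if b then
    (if p is w0 :: q then
       (if all (mem C) p then (y, true, p)
        else ((comp_tail w0 q).1, false, (comp_tail w0 q).2))
     else (y, b, p))
  else ((comp_tail y p).1, false, (comp_tail y p).2).

Lemma trunc_htrekP y t b p : is_htrek G y t b p -> t \in VC ->
  let: (z, b', p') := trunc_htrek y b p in
  [/\ is_htrek GC z t b' p', hright z b' p' \subset hright y b p,
      z \in C -> z = y & (z \in C) || (z \in hright y b p)].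
Proof.
rewrite {1}/is_htrek => /andP[/andP[yN u] r] tV; case: b r => [|].
  case: p u => // w0 q u /and3P[bb pq /eqP lq] /=.
  case: ifP => [/andP[w0C alq]|nal].
    have yC := sib_comp w0C bb.
    split=> //; last by rewrite yC.
    rewrite /= in u; rewrite /is_htrek /= comp_VC // u bb yC w0C /=.
    by rewrite dirpath_mixed_comp ?lq ?eqxx // comp_VC.
  move: u; rewrite /= => /andP[_ u].
  have [ht sub] := comp_tail_htrek pq u lq tV.
  have [_ al hC _ _] := comp_tailP w0 q (dir G).
  have znC : (comp_tail w0 q).1 \notin C.
    apply/negP => zC; have [e1 e2] := hC zC.
    by move: nal; rewrite /= -{1}e1 zC -e2 al.
  split=> //.
  - by apply/subsetP => x; rewrite !inE => /sub.
  - by move=> zC; rewrite zC in znC.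
  - by rewrite (negbTE znC) /= inE sub // mem_head.
case/andP=> py /eqP ly /=.
have [ht sub] := comp_tail_htrek py u ly tV.
have [_ _ hC _ _] := comp_tailP y p (dir G).
split=> //.
- by apply/subsetP => x; rewrite !inE => /sub.
- by case/hC.
- by rewrite inE sub ?mem_head ?orbT.
Qed.

(* Distinctness: two equal new sources outside C would lie on two disjoint
   right sides. *)
Lemma htsystem_restrict (Y P : {set T}) : P \subset VC -> htsystem G Y P ->
  exists g : T -> T, [/\ {in Y &, injective g}, htsystem GC (g @: Y) P,
    {in Y, forall x, g x \in C -> g x = x} & {in Y, forall x, g x \in nodes GC}].
Proof.
move=> PV [f [hb [hp [finj [fim [ftr fdis]]]]]].
pose g x := (trunc_htrek x (hb x) (hp x)).1.1.
pose tb x := (trunc_htrek x (hb x) (hp x)).1.2.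
pose tp x := (trunc_htrek x (hb x) (hp x)).2.
have TP x : x \in Y -> [/\ is_htrek GC (g x) (f x) (tb x) (tp x),
    hright (g x) (tb x) (tp x) \subset hright x (hb x) (hp x),
    g x \in C -> g x = x & (g x \in C) || (g x \in hright x (hb x) (hp x))].
  move=> xY; have fV : f x \in VC by apply/(subsetP PV); rewrite -fim imset_f.
  have := trunc_htrekP (ftr x xY) fV.
  by rewrite /g /tb /tp; case: trunc_htrek => [[]].
have ginj : {in Y &, injective g}.
  move=> x1 x2 h1 h2 e; apply/eqP/negPn/negP => ne.
  have [_ _ c1 d1] := TP x1 h1; have [_ _ c2 d2] := TP x2 h2.
  case zC: (g x1 \in C).
    have zC2 : g x2 \in C by rewrite -e.
    by move/eqP: ne; apply; rewrite -(c1 zC) -(c2 zC2) e.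
  rewrite zC /= in d1; rewrite -e zC /= in d2.
  have [_ dr] := fdis _ _ h1 h2 ne.
  by rewrite (disjointFr dr d1) in d2.
pose inv z := odflt z [pick x in Y | g x == z].
have invK x : x \in Y -> inv (g x) = x.
  move=> xY; rewrite /inv; case: pickP => [x' /andP[x'Y /eqP e] | none] /=.
    exact: ginj.
  by have := none x; rewrite xY eqxx.
exists g; split=> //; last 2 first.
- by move=> x xY; have [_ _ c _] := TP x xY.
- by move=> x xY; have [/andP[/andP[] ] ] := TP x xY.
exists (fun z => f (inv z)), (fun z => tb (inv z)), (fun z => tp (inv z)).
split; [|split; [|split]].
- move=> z1 z2 /imsetP[x1 h1 ->] /imsetP[x2 h2 ->]; rewrite !invK // => e.
  by rewrite (finj _ _ h1 h2 e).
- by rewrite -fim -imset_comp; apply: eq_in_imset => x xY /=; rewrite invK.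
- by move=> z /imsetP[x xY ->]; rewrite invK //; have [] := TP x xY.
- move=> z1 z2 /imsetP[x1 h1 ->] /imsetP[x2 h2 ->]; rewrite !invK // => ne.
  have ne' : x1 != x2 by apply: contra ne => /eqP ->.
  have [_ dr] := fdis _ _ h1 h2 ne'.
  have [_ s1 _ _] := TP x1 h1; have [_ s2 _ _] := TP x2 h2.
  split; first by rewrite /hleft disjoints_subset sub1set !inE.
  exact: (disjointWl s1 (disjointWr s2 dr)).
Qed.

Lemma HTC_restrict Y v : v \in C -> HTC G Y v ->
  exists Y', HTC GC Y' v /\ {in Y', forall z, z \in C -> z \in Y}.
Proof.
move=> vC [_ cardY disj sys].
have PV : pa G v \subset VC.
  by apply/subsetP => w; rewrite inE => /andP[_ /(parent_VC vC)].
have [g [ginj sys' gC gN]] := htsystem_restrict PV sys.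
exists (g @: Y); split.
  2: by move=> z /imsetP[x xY ->] zC; rewrite (gC x xY zC).
split; last by rewrite pa_mixed_comp.
- by apply/subsetP => z /imsetP[x xY ->]; apply: gN.
- by rewrite card_in_imset // cardY pa_mixed_comp.
rewrite sib_mixed_comp // disjoints_subset; apply/subsetP => z /imsetP[x xY ->].
rewrite !inE; case zC: (g x \in C).
  rewrite (gC x xY zC).
  by move: disj; rewrite disjoints_subset => /subsetP /(_ x xY); rewrite !inE.
apply/negP => /orP[/eqP e|]; first by rewrite e vC in zC.
by case/andP => _ /(sib_comp vC); rewrite zC.
Qed.

Lemma HTC_lift Y v : v \in C -> HTC GC Y v -> HTC G Y v.
Proof.
move=> vC [YN cardY disj [f [hb [hp [finj [fim [ftr fdis]]]]]]].
split.
- by apply/subsetP => z /(subsetP YN) /VC_nodes.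
- by rewrite cardY pa_mixed_comp.
- by rewrite -sib_mixed_comp.
exists f, hb, hp; split; [|split; [|split]] => //.
- by rewrite -pa_mixed_comp.
- by move=> x xY; apply: htrek_lift; apply: ftr.
Qed.

(* A node of G_C outside C has no parents there: the empty set is HTC. *)
Lemma HTC_outer v : v \notin C -> HTC GC set0 v.
Proof.
move=> vnC; have pa0 := pa_mixed_comp_outer vnC.
split.
- exact: sub0set.
- by rewrite pa0 !cards0.
- by rewrite disjoints_subset sub0set.
exists id, (fun _ => false), (fun _ => [::]).
by rewrite pa0 imset0; split; [|split; [|split]] => // x; rewrite inE.
Qed.

(* A node of an HTC set of v in C that lies outside C reaches v by a nonempty
   directed path of G: its half-trek is directed and ends at a parent of v. *)
Lemma HTC_outside_path Y v y : v \in C -> HTC GC Y v -> y \in Y -> y \notin C ->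
  exists2 q, q != [::] & path (dir G) y q && (last y q == v).
Proof.
move=> vC [_ _ _ [f [hb [hp [_ [fim [ftr _]]]]]]] yY ynC.
have [_ [pq lq]] := htrek_from_outside (ftr y yY) ynC.
have : f y \in pa G v by rewrite -pa_mixed_comp // -fim imset_f.
rewrite inE => /andP[_ d].
exists (rcons (hp y) v); first by case: (hp y).
by rewrite rcons_path pq lq d last_rcons eqxx.
Qed.

Lemma in_htr_lift v w : v \in C -> in_htr GC v w -> w \in C /\ in_htr G v w.
Proof.
move=> vC [wV ne ns [b [p ht]]].
have wC := htrek_target_comp ht vC.
split=> //; split=> //.
- exact: comp_nodes.
- by rewrite -sib_mixed_comp.
- by exists b, p; apply: htrek_lift.
Qed.

Lemma strict_total_order_restrict ord :
  strict_total_order G ord -> strict_total_order GC ord.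
Proof.
case=> [irr [tr tot]]; split; [|split].
- by move=> v /VC_nodes; apply: irr.
- by move=> u v w /VC_nodes hu /VC_nodes hv /VC_nodes hw; apply: tr.
- by move=> v w /VC_nodes hv /VC_nodes hw; apply: tot.
Qed.

Lemma HTC_family_restrict (Y : T -> {set T}) :
  {in C, forall v, HTC G (Y v) v} ->
  exists Y' : T -> {set T},
    [/\ {in nodes GC, forall v, HTC GC (Y' v) v},
        {in C, forall v, {in Y' v, forall z, z \in C -> z \in Y v}}
      & forall v, v \notin C -> Y' v = set0].
Proof.
move=> hY.
pose R v (Z : {set T}) :=
  (v \in C -> HTC GC Z v /\ {in Z, forall z, z \in C -> z \in Y v}) /\
  (v \notin C -> Z = set0).
have [Y' Y'P] : exists Y' : T -> {set T}, forall v, R v (Y' v).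
  apply: ClassicalEpsilon.choice => v; case vC: (v \in C).
    by have [Z [h1 h2]] := HTC_restrict vC (hY v vC); exists Z; rewrite /R vC.
  by exists set0; rewrite /R vC.
exists Y'; split => v.
- move=> _; case vC: (v \in C); first by have [/(_ vC)[]] := Y'P v.
  have [_ ->] := Y'P v; first by apply: HTC_outer; rewrite vC.
  by rewrite vC.
- by move=> vC; have [/(_ vC)[]] := Y'P v.
- by have [_] := Y'P v.
Qed.

(* First claim: HTC-identifiability passes to the mixed component; the
   restricted family keeps the total order, since half-treks of G_C from C are
   half-treks of G and HTC sets of G_C agree with those of G on C. *)
Lemma HTC_identifiable_comp : HTC_identifiable G -> HTC_identifiable GC.
Proof.
move=> [Y [ord [hY [sto hord]]]].
have [Y' [hY' agree out]] :=
  HTC_family_restrict (fun v vC => hY v (comp_nodes vC)).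
exists Y', ord; split; first exact: hY'.
split; first exact: strict_total_order_restrict.
move=> v w _ wY hin; case vC: (v \in C); last by rewrite out ?vC // inE in wY.
have [wC hin'] := in_htr_lift vC hin.
exact: hord (comp_nodes vC) (agree v vC w wY wC) hin'.
Qed.

(* An infinite-to-one mixed component makes G infinite-to-one: restricting a
   family of HTC sets of G produces a two-cycle of G_C inside C, which is a
   two-cycle of the original family. *)
Lemma HTC_infinite_to_one_of_comp :
  HTC_infinite_to_one GC -> HTC_infinite_to_one G.
Proof.
move=> HC Y _.
case: (classic (exists2 v, v \in nodes G & ~ HTC G (Y v) v)) => [|hn].
  by left.
have hall v : v \in nodes G -> HTC G (Y v) v.
  by move=> vN; apply: NNPP => nh; apply: hn; exists v.
have [Y' [hY' agree out]] :=
  HTC_family_restrict (fun v vC => hall v (comp_nodes vC)).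
have Y'N v : v \in nodes GC -> Y' v \subset nodes GC.
  by move=> vV; case: (hY' v vV).
have [[v vV []]|[v [w [_ _ vY wY]]]] := HC Y' Y'N.
  exact: hY'.
have wC : w \in C by apply: contraT => wnC; rewrite out // inE in vY.
have vC : v \in C by apply: contraT => vnC; rewrite out // inE in wY.
by right; exists v, w; split; rewrite ?comp_nodes ?(agree w) ?(agree v).
Qed.

End MixedComponent.

Lemma not_infinite_to_one_witness (T : finType) (H : mgraph T) :
  ~ HTC_infinite_to_one H ->
  exists Y : T -> {set T}, {in nodes H, forall v, HTC H (Y v) v} /\
    ~ (exists v w, [/\ v \in nodes H, w \in nodes H, v \in Y w & w \in Y v]).
Proof.
move=> notinf; apply: NNPP => nowit; apply: notinf => Y YN.
apply: NNPP => /not_or_and[nobad no2]; apply: nowit; exists Y; split=> //.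
by move=> v vN; apply: NNPP => nh; apply: nobad; exists v.
Qed.

Section Components.
Variable T : finType.
Variable G : mgraph T.
Hypothesis wfG : wf_mgraph G.

Definition bcomp v : {set T} := [set u in nodes G | connect (bid G) v u].

Lemma bcomp_is_component v : v \in nodes G -> is_bcomponent G (bcomp v).
Proof. by move=> vN; exists v. Qed.

Lemma bcomp_self v : v \in nodes G -> v \in bcomp v.
Proof. by move=> vN; rewrite inE vN connect0. Qed.

Lemma bcomp_eq u v : u \in bcomp v -> bcomp u = bcomp v.
Proof.
rewrite inE => /andP[_ c].
have sym : connect_sym (bid G).
  by apply: sym_connect_sym => x y; have [_ [_ [-> _]]] := wfG.
by apply/setP => x; rewrite !inE (same_connect sym c).
Qed.

(* In an acyclic graph, HTC sets of two different components cannot contain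
   each other's nodes: each would reach the other by a directed path. *)
Lemma no_cross_component_two_cycle v w (Yv Yw : {set T}) : acyclic G ->
  v \in nodes G -> w \in nodes G ->
  HTC (mixed_comp G (bcomp v)) Yv v -> HTC (mixed_comp G (bcomp w)) Yw w ->
  w \in Yv -> v \in Yw -> w \notin bcomp v -> False.
Proof.
move=> acG vN wN hv hw wYv vYw wnv.
have vnw : v \notin bcomp w.
  by apply/negP => /bcomp_eq e; move: wnv; rewrite e bcomp_self.
have [q1 n1 /andP[p1 /eqP l1]] :=
  HTC_outside_path wfG (bcomp_is_component wN) (bcomp_self wN) hw vYw vnw.
have [q2 _ /andP[p2 /eqP l2]] :=
  HTC_outside_path wfG (bcomp_is_component vN) (bcomp_self vN) hv wYv wnv.
apply: acG; exists v, (q1 ++ q2); split; [|split].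
- by move: n1; case: (q1).
- by rewrite cat_path p1 l1 p2.
- by rewrite last_cat l1 l2.
Qed.

(* Second claim, hard direction: if no component is infinite-to-one, the
   witnessing families of all components glue to a witness for G. *)
Lemma comp_HTC_infinite_to_one : acyclic G -> HTC_infinite_to_one G ->
  exists2 C : {set T}, is_bcomponent G C & HTC_infinite_to_one (mixed_comp G C).
Proof.
move=> acG Hinf; apply: NNPP => Hno.
pose good C (F : T -> {set T}) := is_bcomponent G C ->
  {in nodes (mixed_comp G C), forall v, HTC (mixed_comp G C) (F v) v} /\
  ~ (exists v w, [/\ v \in nodes (mixed_comp G C), w \in nodes (mixed_comp G C),
                     v \in F w & w \in F v]).
have [F FP] : exists F : {set T} -> T -> {set T}, forall C, good C (F C).
  apply: ClassicalEpsilon.choice => C.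
  case: (classic (is_bcomponent G C)) => hC; last by exists (fun _ => set0).
  have [|Y hY] := not_infinite_to_one_witness (H := mixed_comp G C).
    by move=> h; apply: Hno; exists C.
  by exists Y.
pose Y v := F (bcomp v) v.
have hY v : v \in nodes G -> HTC (mixed_comp G (bcomp v)) (Y v) v.
  move=> vN; have [hF _] := FP _ (bcomp_is_component vN).
  exact/hF/comp_VC/bcomp_self.
have hYG v : v \in nodes G -> HTC G (Y v) v.
  move=> vN.
  exact: (HTC_lift wfG (bcomp_is_component vN) (bcomp_self vN) (hY v vN)).
have YN v : v \in nodes G -> Y v \subset nodes G by case/hYG.
have [[v vN []]|[v [w [vN wN vYw wYv]]]] := Hinf Y YN.
  exact: hYG.
case wv: (w \in bcomp v); last first.
  exact: (no_cross_component_two_cycle acG vN wN (hY v vN) (hY w wN) wYv vYw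
                                      (negbT wv)).
have [_ no2] := FP _ (bcomp_is_component vN); apply: no2; exists v, w.
rewrite /Y (bcomp_eq wv) in vYw; split=> //; apply: comp_VC => //.
exact: bcomp_self.
Qed.

End Components.

Theorem mainTheorem12 (T : finType) (G : mgraph T) :
  wf_mgraph G -> acyclic G ->
  (HTC_identifiable G ->
     forall C : {set T}, is_bcomponent G C -> HTC_identifiable (mixed_comp G C)) /\
  (HTC_infinite_to_one G <->
     exists2 C : {set T}, is_bcomponent G C & HTC_infinite_to_one (mixed_comp G C)).
Proof.
move=> wfG acG; split.
  by move=> hid C compC; apply: (HTC_identifiable_comp wfG compC hid).
split; first exact: comp_HTC_infinite_to_one.
by case=> C compC hinf; apply: (HTC_infinite_to_one_of_comp wfG compC hinf).
Qed.
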